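(* Every atomic egalitarian rewrite system $\mathcal{R}=(S,\le,\Sigma,E,M,R)$ can be transformed into a readable one $\mathcal{R}'=(S,\le,\Sigma,E,M,R')$ (where only the set of rules has changed) that induces the same half-rewrite relation.
   Context: An atomic egalitarian rewrite system is a tuple $\mathcal{R}=(S,\le,\Sigma,E,M,R)$ where: $(S,\le,\Sigma)$ is a (kind-completed) order-sorted signature; there are distinguished sorts $\texttt{State}$ and $\texttt{Trans}$ with a common supersort $\texttt{Stage}$, and the system is topmost (no term of sort $\texttt{Stage}$ contains a proper subterm of sort $\texttt{Stage}$); $E$ is a set of possibly conditional equations ``$t=t' \text{ if } C$''; $M$ is a set of possibly conditional membership axioms ``$t:s \text{ if } C$''; and $R$ is a set of possibly conditional rewrite rules ``$t \xrightarrow{\ell} t' \text{ if } C$'' with $t,t'\in T_\Sigma(X)_{\texttt{State}}$ and $\ell\in T_\Sigma(X)_{\texttt{Trans}}$ (a transition term replacing the usual rule label). In all cases the condition $C$ is a conjunction of equational conditions $t_i=t'_i$ and membership conditions $t_j:s_j$ (no rewrite conditions). Half-rewrite relation: for ground terms $u,v$, $u\rightarrow v$ holds iff either there are a rule ``$t \xrightarrow{\ell} t' \text{ if } C$'' in $R$ and a substitution $\theta_1:\mathrm{vars}(\ell,t,t',C)\to T_\Sigma$ with $\mathcal{R}\models C\theta_1$, $u=_E t\theta_1$ and $v=_E \ell\theta_1$; or there are such a rule and a substitution $\theta_2$ with $\mathcal{R}\models C\theta_2$, $u=_E\ell\theta_2$ and $v=_E t'\theta_2$ (where $=_E$ is equality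 modulo the equations $E$). Readability: a rule is readable iff for every two consecutive half rewrites $u\rightarrow v$ and $v\rightarrow w$ performed using that rule with substitutions $\theta_1$ and $\theta_2$ respectively, the same two half rewrites can be obtained by using the same substitution for both; an atomic egalitarian rewrite system is readable if all its rules are. *)

From Stdlib Require Import List.
Import ListNotations.
Set Implicit Arguments.

Record osig := OSig {
  sort : Type;
  sle : sort -> sort -> Prop;
  opsym : Type;
  decl : opsym -> list sort -> sort -> Prop;
  State : sort;
  Trans : sort;
  Stage : sort
}.

Section Rewriting.
Variable Sg : osig.

Inductive term (V : Type) : Type :=
| Var (x : V)
| App (f : opsym Sg) (args : list (term V)).
Arguments Var {V} x.
Arguments App {V} f args.

(* Variables: countably many of each sort; a variable carries its sort. *)
Definition var : Type := (nat * sort Sg)%type.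
Definition oterm := term var.
Definition gterm := term Empty_set.

Fixpoint vars (t : oterm) : list var :=
  match t with
  | Var x => [x]
  | App _ l => flat_map vars l
  end.

Fixpoint subst (th : var -> gterm) (t : oterm) : gterm :=
  match t with
  | Var x => th x
  | App f l => App f (map (subst th) l)
  end.

Fixpoint gembed (u : gterm) : oterm :=
  match u with
  | Var x => match x with end
  | App f l => App f (map gembed l)
  end.

Inductive atom :=
| AEq (a b : oterm)
| AMem (a : oterm) (s : sort Sg).

Definition cond := list atom.

Definition atom_vars (c : atom) : list var :=
  match c with
  | AEq a b => vars a ++ vars b
  | AMem a _ => vars a
  end.
Definition cond_vars (C : cond) : list var := flat_map atom_vars C.

Record eqn := Eqn { e_lhs : oterm; e_rhs : oterm; e_cond : cond }.
Record memb := Memb { m_term : oterm; m_sort : sort Sg; m_cond : cond }.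
Record rule := Rule { r_lhs : oterm; r_label : oterm; r_rhs : oterm; r_cond : cond }.

Definition eqn_vars (e : eqn) := vars (e_lhs e) ++ vars (e_rhs e) ++ cond_vars (e_cond e).
Definition memb_vars (m : memb) := vars (m_term m) ++ cond_vars (m_cond m).
Definition rule_vars (r : rule) :=
  vars (r_label r) ++ vars (r_lhs r) ++ vars (r_rhs r) ++ cond_vars (r_cond r).

Inductive styped : oterm -> sort Sg -> Prop :=
| st_var (x : var) s : sle Sg (snd x) s -> styped (Var x) s
| st_app f l ss s s' : decl Sg f ss s -> Forall2 styped l ss -> sle Sg s s' ->
    styped (App f l) s'.

Inductive psubterm : oterm -> oterm -> Prop :=
| ps_arg f l v : In v l -> psubterm v (App f l)
| ps_trans f l v w : In w l -> psubterm v w -> psubterm v (App f l).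

Definition partial_order : Prop :=
  (forall s, sle Sg s s) /\
  (forall s1 s2 s3, sle Sg s1 s2 -> sle Sg s2 s3 -> sle Sg s1 s3) /\
  (forall s1 s2, sle Sg s1 s2 -> sle Sg s2 s1 -> s1 = s2).

Inductive connected : sort Sg -> sort Sg -> Prop :=
| conn_le s s' : sle Sg s s' -> connected s s'
| conn_sym s s' : connected s s' -> connected s' s
| conn_trans s1 s2 s3 : connected s1 s2 -> connected s2 s3 -> connected s1 s3.

Definition is_kind (k : sort Sg) : Prop := forall s, sle Sg k s -> s = k.

Definition kind_completed : Prop :=
  (forall s, exists k, is_kind k /\ sle Sg s k /\
     forall s', connected s s' -> sle Sg s' k) /\
  (forall f ss s, decl Sg f ss s ->
     exists ks k, decl Sg f ks k /\ Forall is_kind ks /\ is_kind k /\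
       Forall2 (sle Sg) ss ks /\ sle Sg s k).

Definition topmost : Prop :=
  forall t u, styped t (Stage Sg) -> psubterm u t -> ~ styped u (Stage Sg).

Definition rule_wf (r : rule) : Prop :=
  styped (r_lhs r) (State Sg) /\ styped (r_rhs r) (State Sg) /\
  styped (r_label r) (Trans Sg).

Definition atomic_egalitarian (E : eqn -> Prop) (M : memb -> Prop)
    (R : rule -> Prop) : Prop :=
  partial_order /\ kind_completed /\
  sle Sg (State Sg) (Stage Sg) /\ sle Sg (Trans Sg) (Stage Sg) /\
  topmost /\ (forall r, R r -> rule_wf r).

Section Deduction.
Variable E : eqn -> Prop.
Variable M : memb -> Prop.

(* Membership equational logic deduction on ground terms:
   deq u v  means  E u M |- u = v   (i.e. u =_E v),
   dmem u s means  E u M |- u : s. *)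
Inductive deq : gterm -> gterm -> Prop :=
| deq_refl u : deq u u
| deq_sym u v : deq u v -> deq v u
| deq_trans u v w : deq u v -> deq v w -> deq u w
| deq_cong f l1 l2 : Forall2 deq l1 l2 -> deq (App f l1) (App f l2)
| deq_ax (e : eqn) (th : var -> gterm) :
    E e ->
    (forall x, In x (eqn_vars e) -> dmem (th x) (snd x)) ->
    (forall a b, In (AEq a b) (e_cond e) -> deq (subst th a) (subst th b)) ->
    (forall a s, In (AMem a s) (e_cond e) -> dmem (subst th a) s) ->
    deq (subst th (e_lhs e)) (subst th (e_rhs e))
with dmem : gterm -> sort Sg -> Prop :=
| dm_op f l ss s : decl Sg f ss s -> Forall2 dmem l ss -> dmem (App f l) s
| dm_sub u s s' : dmem u s -> sle Sg s s' -> dmem u s'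
| dm_eq u v s : deq u v -> dmem u s -> dmem v s
| dm_ax (m : memb) (th : var -> gterm) :
    M m ->
    (forall x, In x (memb_vars m) -> dmem (th x) (snd x)) ->
    (forall a b, In (AEq a b) (m_cond m) -> deq (subst th a) (subst th b)) ->
    (forall a s, In (AMem a s) (m_cond m) -> dmem (subst th a) s) ->
    dmem (subst th (m_term m)) (m_sort m).

(* R |= C theta  (satisfaction in the initial model of (Sigma, E u M)). *)
Definition csat (th : var -> gterm) (C : cond) : Prop :=
  (forall a b, In (AEq a b) C -> deq (subst th a) (subst th b)) /\
  (forall a s, In (AMem a s) C -> dmem (subst th a) s).

Definition adm (th : var -> gterm) (xs : list var) : Prop :=
  forall x, In x xs -> dmem (th x) (snd x).

Definition hstep (r : rule) (th : var -> gterm) (u v : gterm) : Prop :=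
  adm th (rule_vars r) /\ csat th (r_cond r) /\
  ((deq u (subst th (r_lhs r)) /\ deq v (subst th (r_label r))) \/
   (deq u (subst th (r_label r)) /\ deq v (subst th (r_rhs r)))).

Definition hrw (R : rule -> Prop) (u v : gterm) : Prop :=
  exists r th, R r /\ hstep r th u v.

Definition readable_rule (r : rule) : Prop :=
  forall u v w th1 th2, hstep r th1 u v -> hstep r th2 v w ->
    exists th, hstep r th u v /\ hstep r th v w.

Definition readable (R : rule -> Prop) : Prop :=
  forall r, R r -> readable_rule r.

End Deduction.
End Rewriting.

From Stdlib Require Import List.
Import ListNotations.

(* Two half rewrites with one rule may use substitutions that differ modulo
   E, which is what breaks readability.  Replace every rule by its copies
   pinned to a ground substitution th0, i.e. with the extra equational
   conditions x = th0 x for each variable x of the rule.  Any substitution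
   satisfying the conditions of a pinned copy agrees with th0 modulo E on
   the variables of the rule, so two such substitutions are interchangeable
   and every pinned copy is readable.  The copy pinned to th itself performs
   exactly the half rewrites that the original rule performs with th, and
   the terms of the rule are untouched, so the system stays atomic
   egalitarian. *)

Section Pinning.
Variable Sg : osig.

Fixpoint term_ind_list V (P : term Sg V -> Prop)
    (HVar : forall x, P (Var Sg x))
    (HApp : forall f l, Forall P l -> P (App f l)) (t : term Sg V) : P t :=
  match t with
  | Var _ x => HVar x
  | App f l => HApp f l ((fix go (l : list (term Sg V)) : Forall P l :=
       match l with
       | [] => Forall_nil _
       | a :: l' => Forall_cons _ (term_ind_list _ P HVar HApp a) (go l')
       end) l)
  end.

Lemma subst_gembed (th : var Sg -> gterm Sg) (g : gterm Sg) :
  subst th (gembed g) = g.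
Proof.
  induction g as [[]|f l IH] using (@term_ind_list Empty_set); simpl.
  f_equal. rewrite map_map.
  induction IH; simpl; f_equal; assumption.
Qed.

Lemma vars_gembed (g : gterm Sg) : vars (gembed g) = [].
Proof.
  induction g as [[]|f l IH] using (@term_ind_list Empty_set); simpl.
  induction IH as [|a l Ha _ IHl]; simpl; [reflexivity|].
  rewrite Ha; exact IHl.
Qed.

Variables (E : eqn Sg -> Prop) (M : memb Sg -> Prop).

Lemma subst_deq (th1 th2 : var Sg -> gterm Sg) (t : oterm Sg) :
  (forall x, In x (vars t) -> deq E M (th1 x) (th2 x)) ->
  deq E M (subst th1 t) (subst th2 t).
Proof.
  induction t as [x|f l IH] using (@term_ind_list (var Sg)); intros Hth; simpl in *.
  - apply Hth; left; reflexivity.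
  - apply deq_cong.
    induction IH as [|a l Ha _ IHl]; simpl in *; constructor.
    + apply Ha; intros x Hx; apply Hth, in_or_app; left; exact Hx.
    + apply IHl; intros x Hx; apply Hth, in_or_app; right; exact Hx.
Qed.

Lemma csat_app (th : var Sg -> gterm Sg) (C C' : cond Sg) :
  csat E M th (C ++ C') <-> csat E M th C /\ csat E M th C'.
Proof.
  unfold csat; split.
  - intros [Heq Hmem]; repeat split; intros;
      (apply Heq || apply Hmem); apply in_or_app; auto.
  - intros [[Heq Hmem] [Heq' Hmem']]; split; intros a b Hin;
      apply in_app_iff in Hin as [Hin|Hin]; auto.
Qed.

Lemma hstep_deq_subst (r : rule Sg) (th1 th2 : var Sg -> gterm Sg)
    (u v : gterm Sg) :
  adm E M th1 (rule_vars r) -> csat E M th1 (r_cond r) ->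
  (forall x, In x (rule_vars r) -> deq E M (th1 x) (th2 x)) ->
  hstep E M r th2 u v -> hstep E M r th1 u v.
Proof.
  intros Hadm Hcsat Hth [_ [_ Hstep]].
  assert (Hsubst : forall t, incl (vars t) (rule_vars r) ->
    deq E M (subst th2 t) (subst th1 t)).
  { intros t Ht. apply subst_deq. intros x Hx. apply deq_sym, Hth, Ht, Hx. }
  unfold rule_vars in Hsubst.
  split; [exact Hadm|split; [exact Hcsat|]].
  destruct Hstep as [[Hu Hv]|[Hu Hv]]; [left|right]; split;
    (eapply deq_trans; [eassumption|]);
    apply Hsubst; intros x Hx; rewrite !in_app_iff; tauto.
Qed.

Definition pins (th0 : var Sg -> gterm Sg) (xs : list (var Sg)) : cond Sg :=
  map (fun x => AEq (Var Sg x) (gembed (th0 x))) xs.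

Definition pinned_rule (r : rule Sg) (th0 : var Sg -> gterm Sg) : rule Sg :=
  Rule (r_lhs r) (r_label r) (r_rhs r) (r_cond r ++ pins th0 (rule_vars r)).

Definition pinned_rules (R : rule Sg -> Prop) (r' : rule Sg) : Prop :=
  exists r th0, R r /\ r' = pinned_rule r th0.

Lemma csat_pins (th : var Sg -> gterm Sg) (xs : list (var Sg)) :
  csat E M th (pins th xs).
Proof.
  split; intros a b Hin; apply in_map_iff in Hin as [x [Hx _]].
  - injection Hx as <- <-. simpl. rewrite subst_gembed. apply deq_refl.
  - discriminate Hx.
Qed.

Lemma csat_pins_deq (th th0 : var Sg -> gterm Sg) (xs : list (var Sg))
    (x : var Sg) :
  csat E M th (pins th0 xs) -> In x xs -> deq E M (th x) (th0 x).
Proof.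
  intros [Heq _] Hx.
  specialize (Heq (Var Sg x) (gembed (th0 x))).
  rewrite subst_gembed in Heq. apply Heq, in_map_iff. eauto.
Qed.

Lemma rule_vars_pinned (r : rule Sg) (th0 : var Sg -> gterm Sg) (x : var Sg) :
  In x (rule_vars (pinned_rule r th0)) <-> In x (rule_vars r).
Proof.
  unfold rule_vars, pinned_rule, cond_vars; simpl.
  rewrite flat_map_app, !in_app_iff.
  split; [|tauto].
  intros [H|[H|[H|[H|H]]]]; try tauto.
  apply in_flat_map in H as [a [Ha Hx]].
  apply in_map_iff in Ha as [y [<- Hy]].
  simpl in Hx. rewrite vars_gembed in Hx. destruct Hx as [<-|[]].
  unfold rule_vars, cond_vars in Hy. rewrite !in_app_iff in Hy. exact Hy.
Qed.

Lemma hstep_pin (r : rule Sg) (th : var Sg -> gterm Sg) (u v : gterm Sg) :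
  hstep E M r th u v -> hstep E M (pinned_rule r th) th u v.
Proof.
  intros [Hadm [Hcsat Hstep]]. split; [|split].
  - intros x Hx. apply Hadm, (rule_vars_pinned r th x), Hx.
  - apply csat_app. split; [exact Hcsat|apply csat_pins].
  - exact Hstep.
Qed.

Lemma hstep_unpin (r : rule Sg) (th0 th : var Sg -> gterm Sg) (u v : gterm Sg) :
  hstep E M (pinned_rule r th0) th u v -> hstep E M r th u v.
Proof.
  intros [Hadm [Hcsat Hstep]]. split; [|split].
  - intros x Hx. apply Hadm, (rule_vars_pinned r th0 x), Hx.
  - apply csat_app in Hcsat. apply Hcsat.
  - exact Hstep.
Qed.

Lemma readable_pinned_rule (r : rule Sg) (th0 : var Sg -> gterm Sg) :
  readable_rule E M (pinned_rule r th0).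
Proof.
  intros u v w th1 th2 Huv Hvw.
  exists th1. split; [exact Huv|].
  destruct Huv as [Hadm [Hcsat _]].
  apply (hstep_deq_subst _ _ th2); [exact Hadm|exact Hcsat| |exact Hvw].
  intros x Hx. apply rule_vars_pinned in Hx.
  destruct Hvw as [_ [Hcsat2 _]].
  apply csat_app in Hcsat, Hcsat2.
  eapply deq_trans; [|apply deq_sym];
    apply (csat_pins_deq _ th0 (rule_vars r)); tauto.
Qed.

Lemma readable_pinned_rules (R : rule Sg -> Prop) :
  readable E M (pinned_rules R).
Proof.
  intros r' [r [th0 [_ ->]]]. apply readable_pinned_rule.
Qed.

Lemma hrw_pinned_rules (R : rule Sg -> Prop) (u v : gterm Sg) :
  hrw E M R u v <-> hrw E M (pinned_rules R) u v.
Proof.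
  split.
  - intros [r [th [Hr Hstep]]].
    exists (pinned_rule r th), th. split; [exists r, th; auto|].
    apply hstep_pin, Hstep.
  - intros [r' [th [[r [th0 [Hr ->]]] Hstep]]].
    exists r, th. split; [exact Hr|]. eapply hstep_unpin, Hstep.
Qed.

Lemma atomic_egalitarian_pinned_rules (R : rule Sg -> Prop) :
  atomic_egalitarian E M R -> atomic_egalitarian E M (pinned_rules R).
Proof.
  intros (Hpo & Hkc & Hstate & Htrans & Htop & Hwf).
  do 5 (split; [assumption|]).
  intros r' [r [th0 [Hr ->]]]. exact (Hwf r Hr).
Qed.

End Pinning.

Theorem proposition3 (Sg : osig) (E : eqn Sg -> Prop) (M : memb Sg -> Prop)
    (R : rule Sg -> Prop) :
  atomic_egalitarian E M R ->
  exists R' : rule Sg -> Prop,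
    atomic_egalitarian E M R' /\ readable E M R' /\
    (forall u v, hrw E M R u v <-> hrw E M R' u v).
Proof.
  intros HR. exists (@pinned_rules Sg R). split; [|split].
  - apply atomic_egalitarian_pinned_rules, HR.
  - apply readable_pinned_rules.
  - apply hrw_pinned_rules.
Qed.
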